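(* Let $X$ be a metrizable space which is locally compact and $\sigma$-compact, and let $f\colon X\to X$ be a homeomorphism which is metric-independent expansive. Then $f^n$ is metric-independent expansive for every integer $n\neq 0$.
   Context: A homeomorphism $f$ of a metric space $(X,d)$ is expansive with respect to $d$ if there is $c>0$ such that for all $x\neq y$ there is $i\in\mathbb Z$ with $d(f^i(x),f^i(y))>c$. It is metric-independent expansive if it is expansive with respect to every metric compatible with the topology of $X$. *)

From HB Require Import structures.
From mathcomp Require Import all_boot all_order all_algebra.
From mathcomp Require Import all_classical all_reals all_analysis.
From mathcomp Require Import Rstruct Rstruct_topology.
Set Implicit Arguments. Unset Strict Implicit. Unset Printing Implicit Defensive.
Import Order.TTheory GRing.Theory Num.Theory.
Local Open Scope classical_set_scope.
Local Open Scope ring_scope.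

Notation Real := Rdefinitions.R.

Definition is_metric (X : Type) (d : X -> X -> Real) : Prop :=
  (forall x y, 0 <= d x y) /\
  (forall x y, d x y = 0 <-> x = y) /\
  (forall x y, d x y = d y x) /\
  (forall x y z, d x z <= d x y + d y z).

Definition compatible_metric (X : topologicalType) (d : X -> X -> Real) : Prop :=
  is_metric d /\
  forall A : set X, open A <->
    (forall x, A x -> exists2 e : Real, 0 < e & [set y | d x y < e] `<=` A).

Definition metrizable (X : topologicalType) : Prop :=
  exists d : X -> X -> Real, compatible_metric d.

Definition sigma_compact (X : topologicalType) : Prop :=
  exists K : nat -> set X, (forall n, compact (K n)) /\ \bigcup_n K n = setT.

Definition homeomorphism_with_inverse (X : topologicalType) (f g : X -> X) : Prop :=
  continuous f /\ continuous g /\ cancel f g /\ cancel g f.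

Definition zpow_map (X : Type) (h hinv : X -> X) (i : int) : X -> X :=
  match i with
  | Posz n => iter n h
  | Negz n => iter n.+1 hinv
  end.

Definition expansive_wrt (X : Type) (h hinv : X -> X) (d : X -> X -> Real) : Prop :=
  exists2 c : Real, 0 < c &
    forall x y : X, x <> y -> exists i : int,
      d (zpow_map h hinv i x) (zpow_map h hinv i y) > c.

Definition metric_independent_expansive (X : topologicalType) (h hinv : X -> X) : Prop :=
  forall d : X -> X -> Real, compatible_metric d -> expansive_wrt h hinv d.

(* Given a compatible metric rho, take a compact exhaustion (W m) of X and let
   dist_infty x be the rho-distance from x to "infinity", i.e. to the complements of
   the W m, penalised by 1/(m+1).  Then D u v = min (rho u v) (dist_infty u + dist_infty v)
   is again a compatible metric, and for every c > 0 it is at most c off some compact set C.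
   Let f be D-expansive with constant c.  If D(f^i x, f^i y) > c, one of f^i x, f^i y lies
   in C; writing i = k + n q with 0 <= k < |n|, uniform continuity of the finitely many maps
   f^k on the compact sets f^-k(C) yields a uniform lower bound on rho(f^(nq) x, f^(nq) y). *)

From HB Require Import structures.
From mathcomp Require Import all_boot all_order all_algebra.
From mathcomp Require Import all_classical all_reals all_analysis.
From mathcomp Require Import finmap Rstruct Rstruct_topology lra.
Set Implicit Arguments. Unset Strict Implicit. Unset Printing Implicit Defensive.
Import Order.TTheory GRing.Theory Num.Theory.
Local Open Scope classical_set_scope.
Local Open Scope ring_scope.
Local Notation Real := Rdefinitions.R.

Section IntegerIterates.
Variables (T : Type) (h hinv : T -> T).
Hypotheses (hK : cancel h hinv) (hinvK : cancel hinv h).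
Local Notation F := (zpow_map h hinv).

Lemma zpow_mapS i x : F (i + 1) x = h (F i x).
Proof.
case: i => [n|[|n]].
- by have -> : Posz n + 1 = Posz n.+1 by rewrite -addn1 PoszD.
- by rewrite /= hinvK.
- have -> : Negz n.+1 + 1 = Negz n by rewrite !NegzE; lra.
  by rewrite /= hinvK.
Qed.

Lemma zpow_mapB1 i x : F (i - 1) x = hinv (F i x).
Proof. by rewrite -{2}(subrK 1 i) zpow_mapS hK. Qed.

Lemma zpow_mapD i k x : F (i + k) x = F i (F k x).
Proof.
elim/int_rec: i x => [|n IH|n IH] x; first by rewrite add0r.
- by rewrite -addn1 PoszD addrAC !zpow_mapS IH.
- by rewrite -addn1 PoszD opprD addrAC !zpow_mapB1 IH.
Qed.

Lemma zpow_mapK i : cancel (F i) (F (- i)).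
Proof. by move=> x; rewrite -zpow_mapD addNr. Qed.

Lemma zpow_mapNK i : cancel (F (- i)) (F i).
Proof. by move=> x; have := zpow_mapK (- i) x; rewrite opprK. Qed.

End IntegerIterates.

Lemma zpow_map_zpow (T : Type) (h hinv : T -> T) (hK : cancel h hinv) (hinvK : cancel hinv h)
    n q x :
  zpow_map (zpow_map h hinv n) (zpow_map h hinv (- n)) q x = zpow_map h hinv (n * q) x.
Proof.
have [Fn_K FnK] := (zpow_mapK hK hinvK n, zpow_mapNK hK hinvK n).
elim/int_rec: q x => [|m IH|m IH] x; first by rewrite mulr0.
- by rewrite -addn1 PoszD (zpow_mapS FnK) IH mulrDr mulr1 addrC (zpow_mapD hK hinvK).
- rewrite -addn1 PoszD opprD (zpow_mapB1 Fn_K FnK) IH mulrDr mulrN1.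
  by rewrite addrC (zpow_mapD hK hinvK).
Qed.

Section MetricFacts.
Variables (T : Type) (d : T -> T -> Real).
Hypothesis dm : is_metric d.

Lemma is_metric_ge0 x y : 0 <= d x y. Proof. by case: dm. Qed.
Lemma is_metric_eq0 x y : d x y = 0 -> x = y. Proof. by case: dm => _ [/(_ x y) []]. Qed.
Lemma is_metric_xx x : d x x = 0. Proof. by case: dm => _ [/(_ x x) [_ ->]]. Qed.
Lemma is_metric_sym x y : d x y = d y x. Proof. by case: dm => _ [_ []]. Qed.
Lemma is_metric_triangle x y z : d x z <= d x y + d y z. Proof. by case: dm => _ [_ [_]]. Qed.

End MetricFacts.

Section CompatibleMetric.
Variable X : topologicalType.

Lemma compatible_ball_open (d : X -> X -> Real) x e :
  compatible_metric d -> open [set y | d x y < e].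
Proof.
case=> dm dopen; apply/dopen => y /= dxy; exists (e - d x y); first by rewrite subr_gt0.
by move=> z /= dyz; have := is_metric_triangle dm x y z; lra.
Qed.

Lemma compact_uniform_continuous (rho D : X -> X -> Real) (h : X -> X) (L : set X) eps :
    compatible_metric rho -> compatible_metric D -> continuous h -> compact L -> 0 < eps ->
  \forall del \near (0 : Real)^'+,
    forall a b, L a -> rho a b < del -> D (h a) (h b) < eps.
Proof.
move=> crho cD hcont cL eps0; have [rhom rhoopen] := crho; have [Dm _] := cD.
pose P del a := forall b, rho a b < del -> D (h a) (h b) < eps.
suff: \forall del \near (0 : Real)^'+, L `<=` P del.
  by apply: filterS => del LP a b /LP; apply.
apply: ((compact_near_coveringP L).1 cL Real ((0 : Real)^'+) P _) => x Lx.
have hO : open (h @^-1` [set z | D (h x) z < eps / 2]).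
  by move/continuousP: hcont; apply; exact: compatible_ball_open.
have hOx : (h @^-1` [set z | D (h x) z < eps / 2]) x by rewrite /= is_metric_xx //; lra.
have [r r0 rO] := (rhoopen _).1 hO x hOx.
exists ([set x' | rho x x' < r / 2], [set del | del < r / 2]).
  split; last by apply: nbhs_right_lt; lra.
  apply: open_nbhs_nbhs; split; first exact: compatible_ball_open.
  by rewrite /= is_metric_xx //; lra.
move=> [x' del] [/= xx' del_r] b x'b.
have hxb : D (h x) (h b) < eps / 2.
  by apply: rO => /=; have := is_metric_triangle rhom x x' b; lra.
have hxx' : D (h x) (h x') < eps / 2 by apply: rO => /=; lra.
have := is_metric_triangle Dm (h x') (h x) (h b).
by rewrite (is_metric_sym Dm (h x') (h x)); lra.
Qed.

End CompatibleMetric.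

Section Exhaustion.
Variable X : topologicalType.
Hypothesis Xlc : locally_compact [set: X].

Lemma compact_open_hull (K : set X) : compact K ->
  exists V L : set X, [/\ open V, compact L, K `<=` V & V `<=` L].
Proof.
move=> cK.
have /choice [N hN] : forall x : X, exists N : set X, nbhs x N /\ compact N.
  move=> x; have [U xU [cU _]] := Xlc (I : [set: X] x).
  by exists U; split => //; move: xU; rewrite /within /=; apply: filterS => y; exact.
(* A finite subcover, via [compact_near_coveringP]: [compact_cover] needs a pointed space. *)
pose growing := filter_from [set: {fset X}] (fun D0 => [set D | (D0 `<=` D)%fset]).
have growingF : Filter growing.
  apply: filter_from_filter; first by exists fset0.
  move=> D1 D2 _ _; exists (D1 `|` D2)%fset => // D /=.
  by rewrite fsubUset => /andP[].
pose P (D : {fset X}) y := exists2 x, x \in D & (N x)° y.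
have [D _ /(_ D (fsubset_refl D)) KD] : \forall D \near growing, K `<=` P D.
  apply: ((compact_near_coveringP K).1 cK _ growing P) => x Kx.
  exists ((N x)°, [set D | x \in D]); last by move=> [y D] [/= Nxy xD]; exists x.
  split; last by exists [fset x]%fset => // D /=; rewrite fsub1set.
  by apply: open_nbhs_nbhs; split; [exact: open_interior|exact: (hN x).1].
exists (\bigcup_(x in [set` D]) (N x)°), (\bigcup_(x in [set` D]) N x); split.
- by apply: bigcup_open => x _; exact: open_interior.
- by rewrite bigcup_fset; apply: bigsetU_compact => x _; exact: (hN x).2.
- exact: KD.
- by move=> y [x Dx Nxy]; exists x => //; exact: interior_subset.
Qed.

Lemma locally_compact_exhaustion : sigma_compact X ->
  exists W : nat -> set X, [/\ forall m, open (W m),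
    forall m, exists2 L, compact L & W m `<=` L,
    forall m n, (m <= n)%N -> W m `<=` W n & forall x, exists m, W m x].
Proof.
move=> [K [cK covK]].
have /choice [VL hVL] : forall m, exists VL : set X * set X,
    [/\ open VL.1, compact VL.2, K m `<=` VL.1 & VL.1 `<=` VL.2].
  by move=> m; have [V [L hVL]] := compact_open_hull (cK m); exists (V, L).
exists (fun m => \bigcup_(i < m.+1) (VL i).1); split.
- by move=> m; apply: bigcup_open => i _; have [] := hVL i.
- move=> m; exists (\bigcup_(i < m.+1) (VL i).2).
    by rewrite bigcup_mkord; apply: bigsetU_compact => i _; have [] := hVL i.
  by move=> y [i im Viy]; exists i => //; have [_ _ _] := hVL i; apply.
- by move=> m n mn y [i im Viy]; exists i => //; exact: leq_trans im _.
- move=> x; have : (\bigcup_m K m) x by rewrite covK.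
  by case=> m _ Kmx; exists m, m => //=; have [_ _ KV _] := hVL m; exact: KV.
Qed.

End Exhaustion.

Definition small_off_compacts (X : topologicalType) (D : X -> X -> Real) : Prop :=
  forall c : Real, 0 < c ->
    exists2 C : set X, compact C & forall u v, ~ C u -> ~ C v -> D u v <= c.

Section ShortcutMetric.
Variables (X : topologicalType) (rho : X -> X -> Real) (W : nat -> set X).
Hypothesis crho : compatible_metric rho.

Let rhom : is_metric rho := crho.1.

(* The constant 1 keeps the set nonempty when no W m misses a point. *)
Let escape_costs x : set Real :=
  [set r | r = 1 \/ exists m y, ~ W m y /\ r = m.+1%:R^-1 + rho x y].

Definition dist_infty x : Real := inf (escape_costs x).

Let escape_costs_ge0 x : lbound (escape_costs x) 0.
Proof.
move=> r [->|[m [y [_ ->]]]] //.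
by rewrite addr_ge0 ?invr_ge0 ?ler0n ?is_metric_ge0.
Qed.

Let dist_infty_ge (b : Real) x :
  (forall r : Real, escape_costs x r -> b <= r) -> b <= dist_infty x.
Proof. by apply: lb_le_inf; exists 1; left. Qed.

Lemma dist_infty_ge0 x : 0 <= dist_infty x.
Proof. exact/dist_infty_ge/escape_costs_ge0. Qed.

Let dist_infty_le_cost x r : escape_costs x r -> dist_infty x <= r.
Proof. by apply: ge_inf; exists 0; exact: escape_costs_ge0. Qed.

Lemma dist_infty_le1 x : dist_infty x <= 1.
Proof. by apply: dist_infty_le_cost; left. Qed.

Lemma dist_infty_le m y x : ~ W m y -> dist_infty x <= m.+1%:R^-1 + rho x y.
Proof. by move=> Wy; apply: dist_infty_le_cost; right; exists m, y. Qed.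

Lemma dist_infty_out m x : ~ W m x -> dist_infty x <= m.+1%:R^-1.
Proof. by move/dist_infty_le => /(_ x); rewrite is_metric_xx // addr0. Qed.

Lemma dist_infty_lipschitz x y : dist_infty x <= dist_infty y + rho x y.
Proof.
rewrite -lerBlDr; apply: dist_infty_ge => r [->|[m [z [Wz ->]]]].
  by have := dist_infty_le1 x; have := is_metric_ge0 rhom x y; lra.
rewrite lerBlDr (le_trans (dist_infty_le x Wz)) // -addrA lerD2l addrC.
exact: is_metric_triangle.
Qed.

Hypotheses (W_open : forall m, open (W m))
  (W_mono : forall m n, (m <= n)%N -> W m `<=` W n) (W_cover : forall x, exists m, W m x).

Lemma dist_infty_gt0 x : 0 < dist_infty x.
Proof.
have [M WMx] := W_cover x.
have [r r0 rW] := (crho.2 _).1 (W_open M) x WMx.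
pose b := Num.min r M.+1%:R^-1.
have b0 : 0 < b by rewrite lt_min r0 invr_gt0 ltr0n.
have br : b <= r by rewrite ge_min lexx.
have bM : b <= M.+1%:R^-1 by rewrite ge_min lexx orbT.
have M1 : M.+1%:R^-1 <= 1 :> Real by rewrite invf_le1 ?ltr0n // ler1n.
apply: (lt_le_trans b0); apply: dist_infty_ge => s [->|[m [y [Wy ->]]]].
  exact: le_trans bM M1.
have rxy0 := is_metric_ge0 rhom x y.
case: (leqP M m) => [Mm|mM].
  have rxy : r <= rho x y by rewrite leNgt; apply/negP => /rW /(W_mono Mm).
  by apply: (le_trans br); apply: (le_trans rxy); rewrite lerDr invr_ge0.
have Mm : M.+1%:R^-1 <= m.+1%:R^-1 :> Real.
  by rewrite lef_pV2 ?posrE ?ltr0n // ler_nat ltnW.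
by apply: (le_trans bM); apply: (le_trans Mm); rewrite lerDl.
Qed.

Definition shortcut_metric u v : Real := Num.min (rho u v) (dist_infty u + dist_infty v).

Lemma shortcut_metric_le u v : shortcut_metric u v <= rho u v.
Proof. by rewrite ge_min lexx. Qed.

Lemma shortcut_metric_le_dist_infty u v :
  shortcut_metric u v <= dist_infty u + dist_infty v.
Proof. by rewrite ge_min lexx orbT. Qed.

Lemma shortcut_metric_cases u v :
  shortcut_metric u v = rho u v \/ shortcut_metric u v = dist_infty u + dist_infty v.
Proof. by rewrite /shortcut_metric minEle; case: ifP; [left|right]. Qed.

Lemma shortcut_metric_is_metric : is_metric shortcut_metric.
Proof.
split; [|split; [|split]].
- move=> u v; have := dist_infty_ge0 u; have := dist_infty_ge0 v.
  by case: (shortcut_metric_cases u v) => ->; [rewrite is_metric_ge0|lra].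
- move=> u v; split => [|<-]; last first.
    by rewrite /shortcut_metric is_metric_xx // min_l // addr_ge0 ?dist_infty_ge0.
  have := dist_infty_gt0 u; have := dist_infty_gt0 v.
  by case: (shortcut_metric_cases u v) => -> ? ? D0; [exact: is_metric_eq0 D0|exfalso; lra].
- by move=> u v; rewrite /shortcut_metric (is_metric_sym rhom u) addrC.
- move=> u v w; have := shortcut_metric_le u w; have := shortcut_metric_le_dist_infty u w.
  have := dist_infty_lipschitz u v; have := dist_infty_lipschitz w v.
  have := is_metric_triangle rhom u v w; have := dist_infty_ge0 v.
  rewrite (is_metric_sym rhom w v).
  by case: (shortcut_metric_cases u v) => ->; case: (shortcut_metric_cases v w) => ->; lra.
Qed.

Lemma shortcut_metric_compatible : compatible_metric shortcut_metric.
Proof.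
split; first exact: shortcut_metric_is_metric.
move=> A; rewrite crho.2; split=> Aopen x Ax; have [e e0 eA] := Aopen x Ax.
- exists (Num.min e (dist_infty x)); first by rewrite lt_min e0 dist_infty_gt0.
  move=> y /=; rewrite lt_min => /andP[Dxy_e Dxy_x]; apply: eA => /=.
  move: Dxy_e Dxy_x; have := dist_infty_ge0 y.
  by case: (shortcut_metric_cases x y) => -> ? ? ?; lra.
- by exists e => // y /= rxy; apply: eA; exact: le_lt_trans (shortcut_metric_le x y) _.
Qed.

Lemma shortcut_metric_small_off_compacts :
  (forall m, exists2 L, compact L & W m `<=` L) -> small_off_compacts shortcut_metric.
Proof.
move=> W_hull c c0.
have [N _ /(_ N (leqnn N)) Nc] := near_infty_natSinv_lt (PosNum (divr_gt0 c0 (ltr0n _ 2))).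
have [L cL WL] := W_hull N; exists L => // u v Lu Lv.
apply: (le_trans (shortcut_metric_le_dist_infty u v)); rewrite [c]splitr.
by apply: lerD; apply/ltW/(le_lt_trans _ Nc)/dist_infty_out => /WL.
Qed.

End ShortcutMetric.

Lemma zpow_map_continuous (X : topologicalType) (f g : X -> X) i :
  continuous f -> continuous g -> continuous (zpow_map f g i).
Proof.
have iter_cont (h : X -> X) k : continuous h -> continuous (iter k h).
  by move=> hc; elim: k => [|k IH] x //=; exact: continuous_comp (IH x) (hc _).
by move=> fc gc; case: i => k; exact: iter_cont.
Qed.

Section PowerExpansive.
Variables (X : topologicalType) (f g : X -> X) (rho D : X -> X -> Real).
Hypotheses (fg : homeomorphism_with_inverse f g)
  (crho : compatible_metric rho) (cD : compatible_metric D).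
Local Notation F := (zpow_map f g).

Lemma expansive_zpow_small_off_compacts (n : int) :
  n != 0 -> small_off_compacts D -> expansive_wrt f g D ->
  expansive_wrt (F n) (F (- n)) rho.
Proof.
have [fc [gc [fK gK]]] := fg.
move=> n0 Dsmall [c c0 fexp]; have [C cC CD] := Dsmall c c0.
have unif : \forall del \near (0 : Real)^'+, forall k : 'I_`|n|%N, forall a b,
    (F (- k%:Z) @` C) a -> rho a b < del -> D (F k a) (F k b) < c.
  apply: filter_forall => k; apply: compact_uniform_continuous => //.
    exact: zpow_map_continuous.
  apply: continuous_compact => //; apply: continuous_subspaceT.
  exact: zpow_map_continuous.
have [del [del0 {}unif]] := filter_ex (filterI (nbhs_right_gt 0) unif).
exists (del / 2); first by rewrite divr_gt0.
have key : forall (k : 'I_`|n|%N) a b, C (F k a) -> c < D (F k a) (F k b) -> del <= rho a b.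
  move=> k a b Ca Dab; rewrite leNgt; apply/negP => rab.
  have aC : (F (- k%:Z) @` C) a by exists (F k a); rewrite ?zpow_mapK.
  by have := unif k a b aC rab; rewrite ltNge (ltW Dab).
move=> x y xy; have [i Dxy] := fexp x y xy.
have kn : (`|(i %% n)%Z| < `|n|)%N.
  by rewrite -ltz_nat gez0_abs ?modz_ge0 // abszE ltz_mod.
pose k := Ordinal kn.
exists (i %/ n)%Z; rewrite !zpow_map_zpow //.
set a := F _ x; set b := F _ y.
have Fi u : F i u = F k (F (n * (i %/ n)%Z) u).
  by rewrite -zpow_mapD // /= gez0_abs ?modz_ge0 // addrC mulrC -divz_eq.
rewrite Fi Fi -/a -/b in Dxy.
have [Ca|Cb] : C (F k a) \/ C (F k b).
  by apply: contrapT => /not_orP[Ca Cb]; move: Dxy; rewrite ltNge CD.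
- by have := key k a b Ca Dxy; lra.
- rewrite (is_metric_sym crho.1); have := key k b a Cb.
  by rewrite (is_metric_sym cD.1) => /(_ Dxy); lra.
Qed.

End PowerExpansive.

Theorem mainTheorem8 (X : topologicalType) (f g : X -> X) :
  metrizable X ->
  locally_compact [set: X] ->
  sigma_compact X ->
  homeomorphism_with_inverse f g ->
  metric_independent_expansive f g ->
  forall n : int, n != 0 ->
    metric_independent_expansive (zpow_map f g n) (zpow_map f g (- n)).
Proof.
move=> _ Xlc Xsc fg fexp n n0 rho crho.
have [W [W_open W_hull W_mono W_cover]] := locally_compact_exhaustion Xlc Xsc.
have cD := shortcut_metric_compatible crho W_open W_mono W_cover.
apply: (expansive_zpow_small_off_compacts fg crho cD n0).
  exact: shortcut_metric_small_off_compacts.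
exact: fexp.
Qed.
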